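(* Let $k \geq 1$ and let $P \in \mathcal{A}_{2k}$. If $P$ is convex, then $k \leq 2$.
   Context: A polygon $P = \{p_1, \ldots, p_n\}$ in the plane is a cyclic sequence of points (vertices), joined by edges $p_i p_{i+1}$, with indices taken modulo $n$. A polygon is convex if it is a simple closed polygon whose boundary bounds a convex region. Alternating polygons: fix coordinates in the plane. Let $\mathbf{x} = (x_1, \ldots, x_k)$ and $\mathbf{y} = (y_1, \ldots, y_k)$ be vectors in $\mathbb{R}^k$ with $x_i > 0$, $y_i > 0$ for all $i$, and $x_i \neq x_j$, $y_i \neq y_j$ for all $i \neq j$. Let $\sigma = (\sigma_1, \ldots, \sigma_{2k}) \in \{-1, +1\}^{2k}$. The polygon $A(\mathbf{x}, \mathbf{y}, \sigma) = \{p_1, \ldots, p_{2k}\}$ is defined by $p_{2i+1} = (\sigma_{2i+1} x_{i+1}, 0)$ for $i = 0, \ldots, k-1$, and $p_{2i} = (0, \sigma_{2i} y_i)$ for $i = 1, \ldots, k$. The family $\mathcal{A}_{2k}$ consists of all polygons $A(\mathbf{x}, \mathbf{y}, \sigma)$ for all such $\mathbf{x}, \mathbf{y}, \sigma$. *)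

From HB Require Import structures.
From mathcomp Require Import all_boot all_order all_algebra.
From mathcomp Require Import reals.
Set Implicit Arguments. Unset Strict Implicit. Unset Printing Implicit Defensive.
Import Order.TTheory GRing.Theory Num.Theory.
Local Open Scope ring_scope.

Section Geometry.
Variable R : realType.

Definition point := (R * R)%type.

(* cross product of (b - a) and (c - a): sign gives the side of c w.r.t. line ab *)
Definition orient (a b c : point) : R :=
  (b.1 - a.1) * (c.2 - a.2) - (b.2 - a.2) * (c.1 - a.1).

Definition on_seg (a b z : point) : Prop :=
  exists t : R, 0 <= t <= 1 /\
    z = (a.1 + t * (b.1 - a.1), a.2 + t * (b.2 - a.2)).

Definition simple_polygon n (p : 'I_n -> point) : Prop :=
  injective p /\
  forall i j : 'I_n, i != j -> forall z : point,
    on_seg (p i) (p (ordS i)) z -> on_seg (p j) (p (ordS j)) z ->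
    (j = ordS i /\ z = p j) \/ (i = ordS j /\ z = p i).

(* Convex polygon: a simple closed polygon bounding a convex region, i.e.
   simple and, for every edge, all vertices lie in one closed half-plane
   bounded by the line through that edge. *)
Definition convex_polygon n (p : 'I_n -> point) : Prop :=
  simple_polygon p /\
  forall i : 'I_n,
    (forall j : 'I_n, 0 <= orient (p i) (p (ordS i)) (p j)) \/
    (forall j : 'I_n, orient (p i) (p (ordS i)) (p j) <= 0).

(* Alternating polygon A(x, y, sigma), 0-indexed: vertex m (0 <= m < 2k) is
   p_(m+1) of the paper, i.e. (sigma_m * x_(m/2), 0) for m even and
   (0, sigma_m * y_(m/2)) for m odd (x, y, sigma all 0-indexed). *)
Definition alt_vertex (x y sigma : nat -> R) (m : nat) : point :=
  if ~~ odd m then (sigma m * x m./2, 0) else (0, sigma m * y m./2).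

Definition alt_polygon k (x y sigma : nat -> R) : 'I_(k.*2) -> point :=
  fun m => alt_vertex x y sigma m.

Definition alt_params k (x y sigma : nat -> R) : Prop :=
  (forall i, (i < k)%N -> 0 < x i /\ 0 < y i) /\
  (forall i j, (i < k)%N -> (j < k)%N -> i <> j -> x i <> x j /\ y i <> y j) /\
  (forall m, (m < k.*2)%N -> sigma m = 1 \/ sigma m = -1).

End Geometry.

Arguments alt_polygon {R} k x y sigma _.
Arguments alt_params {R} k x y sigma.

From mathcomp Require Import all_boot all_order all_algebra.
From mathcomp Require Import reals.
From mathcomp Require Import lra zify.
Set Implicit Arguments. Unset Strict Implicit. Unset Printing Implicit Defensive.
Import Order.TTheory GRing.Theory Num.Theory.
Local Open Scope ring_scope.

(* For k >= 3 the even vertices include three points (a_0, 0), (a_1, 0), (a_2, 0)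
   of the x-axis, with a_i = sigma x_i, distinct since |a_i| = x_i.  The edge from
   (a_i, 0) to the next vertex (0, b), b <> 0, is not horizontal, so the convexity
   condition for that edge puts every even vertex on one side of the vertical
   through (a_i, 0): each a_i would be the minimum or the maximum of
   {a_0, a_1, a_2}, which the middle one is not. *)

Section Extremal.
Variable R : realType.
Implicit Types (S : R -> Prop) (a b c u v : R).

Definition extremal_in S u :=
  (forall c, S c -> u <= c) \/ (forall c, S c -> c <= u).

Lemma extremal_in_sub S S' u :
  (forall c, S' c -> S c) -> extremal_in S u -> extremal_in S' u.
Proof. by move=> sub [H|H]; [left|right] => c /sub /H. Qed.

Lemma extremal_in_of_sign S u v : v != 0 ->
  (forall c, S c -> 0 <= v * (u - c)) \/ (forall c, S c -> v * (u - c) <= 0) ->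
  extremal_in S u.
Proof.
move=> v_neq0; have [v_gt0|v_lt0] : 0 < v \/ v < 0.
  by case: (ltgtP v 0) v_neq0 => // _ _; [right|left].
- by case=> H; [right|left] => c /H ?; nra.
- by case=> H; [left|right] => c /H ?; nra.
Qed.

Lemma extremal_in_three a b c :
  let S := fun t => t = a \/ t = b \/ t = c in
  extremal_in S a -> extremal_in S b -> extremal_in S c ->
  a = b \/ b = c \/ a = c.
Proof.
move=> S ea eb ec.
have Sa : S a by left.
have Sb : S b by right; left.
have Sc : S c by right; right.
case: ea => Ha; case: eb => Hb; case: ec => Hc;
  move: (Ha _ Sb) (Ha _ Sc) (Hb _ Sa) (Hb _ Sc) (Hc _ Sa) (Hc _ Sb) => *;
  first [left; lra | right; left; lra | right; right; lra].
Qed.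

End Extremal.

Lemma signed_neq (R : realType) (s1 s2 a b : R) :
  (s1 = 1 \/ s1 = -1) -> (s2 = 1 \/ s2 = -1) -> 0 < a -> 0 < b -> a <> b ->
  s1 * a <> s2 * b.
Proof. by move=> [->|->] [->|->] a_gt0 b_gt0 a_neq_b eq; apply: a_neq_b; lra. Qed.

Lemma orient_axes (R : realType) (a b c : R) : orient (a, 0) (0, b) (c, 0) = b * (a - c).
Proof. by rewrite /orient /=; lra. Qed.

Section AltPolygon.
Variables (R : realType) (k : nat) (x y sigma : nat -> R).
Hypothesis params : alt_params k x y sigma.
Hypothesis convex : convex_polygon (alt_polygon k x y sigma).

Lemma alt_vertex_even m : ~~ odd m ->
  alt_vertex x y sigma m = (sigma m * x m./2, 0).
Proof. by rewrite /alt_vertex => ->. Qed.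

Lemma alt_vertex_odd m : odd m ->
  alt_vertex x y sigma m = (0, sigma m * y m./2).
Proof. by rewrite /alt_vertex => ->. Qed.

Definition alt_abscissas (t : R) : Prop :=
  exists2 j : 'I_(k.*2), ~~ odd j & t = sigma j * x j./2.

Lemma alt_abscissa_extremal (i : 'I_(k.*2)) : ~~ odd i ->
  extremal_in alt_abscissas (sigma i * x i./2).
Proof.
move=> i_even; case: params => pos [_ sgn].
have lt_i1 : (i.+1 < k.*2)%N.
  rewrite ltn_neqAle ltn_ord andbT; apply: contraNneq i_even => eq_i1.
  by rewrite -[odd i]negbK -oddS eq_i1 odd_double.
have ordS_i : val (ordS i) = i.+1 by rewrite /= modn_small.
have i1_half : (i.+1)./2 = i./2 by rewrite -uphalfE uphalf_half (negbTE i_even).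
have y_neq0 : sigma i.+1 * y i./2 != 0.
  have y_gt0 : 0 < y i./2 by case: (pos i./2) => //; lia.
  by case: (sgn _ lt_i1) => ->; rewrite ?mulN1r ?mul1r ?oppr_eq0 gt_eqF.
apply: (extremal_in_of_sign y_neq0).
have orient_i (j : 'I_(k.*2)) : ~~ odd j ->
    orient (alt_polygon k x y sigma i) (alt_polygon k x y sigma (ordS i))
      (alt_polygon k x y sigma j) =
    sigma i.+1 * y i./2 * (sigma i * x i./2 - sigma j * x j./2).
  move=> j_even; rewrite /alt_polygon ordS_i [alt_vertex _ _ _ i.+1]alt_vertex_odd.
    by rewrite !alt_vertex_even // i1_half orient_axes.
  by rewrite /= i_even.
by case: (convex.2 i) => H; [left|right] => _ [j j_even ->]; rewrite -orient_i.
Qed.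

End AltPolygon.

Theorem lemma1 (R : realType) (k : nat) (x y sigma : nat -> R) :
  (1 <= k)%N -> alt_params k x y sigma ->
  convex_polygon (alt_polygon k x y sigma) -> (k <= 2)%N.
Proof.
move=> _ params convex; rewrite leqNgt; apply/negP => k_gt2.
have [lt0 lt2 lt4] : [/\ (0 < k.*2)%N, (2 < k.*2)%N & (4 < k.*2)%N] by split; lia.
pose a i := sigma i.*2 * x i.
have ext (i : nat) (lt_i : (i.*2 < k.*2)%N) :
    extremal_in (fun t => t = a 0 \/ t = a 1 \/ t = a 2)%N (a i).
  have := alt_abscissa_extremal params convex (i := Ordinal lt_i).
  rewrite /= odd_double doubleK => /(_ isT); apply: extremal_in_sub.
  by move=> t [->|[->|->]]; [exists (Ordinal lt0)|exists (Ordinal lt2)|exists (Ordinal lt4)].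
case: params => pos [dist sgn].
have neq i j : (i < j < 3)%N -> a i <> a j.
  move=> lt_ij; apply: signed_neq; try apply: sgn; try lia.
  - by case: (pos i) => //; lia.
  - by case: (pos j) => //; lia.
  - by case: (dist i j) => //; lia.
by case: (extremal_in_three (ext 0 lt0) (ext 1 lt2) (ext 2 lt4)) => [|[]]; apply: neq.
Qed.
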